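(* Let $\mathcal{M}$ be a circular embedding of a connected graph $X$ with $\ell$ edges on a closed orientable surface of genus $g$. Let $M$, $N$ be its arc-face and arc-tail incidence matrices and $U$ its vertex-face transition matrix. Then the $1$-eigenspace of $U$ is \[(\operatorname{col}(M)\cap\operatorname{col}(N))\oplus(\ker(M^T)\cap\ker(N^T)),\] and it has dimension $\ell+2g$. Moreover, $\operatorname{col}(M)\cap\operatorname{col}(N)=\operatorname{span}\{\mathbf{1}\}$, where $\mathbf{1}$ is the all-ones vector.
   Context: Setting. A circular embedding is a cellular embedding in which every face is bounded by a cycle. Arcs are ordered pairs $(u,v)$ with $\{u,v\}$ an edge, and $u$ is the tail; there are $2\ell$ arcs. Consistent orientation. Fix an orientation of all face boundaries such that each edge shared by two faces receives opposite directions in them. Then every arc lies in exactly one facial walk. Matrices. $M$ is the $2\ell\times s$ arc-face incidence matrix ($M_{(a,b),f}=1$ iff $(a,b)$ lies in the facial walk of $f$). $N$ is the $2\ell\times n$ arc-tail incidence matrix ($N_{(a,b),u}=1$ iff $a=u$). $\widehat M,\widehat N$ are these matrices with each column scaled to unit length. The vertex-face transition matrix is $U=(2\widehat M\widehat M^T-I)(2\widehat N\widehat N^T-I)$. *)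

(* Circular embeddings encoded as combinatorial maps
   (rotation systems) on a finite type D of arcs (darts). *)
From HB Require Import structures.
From mathcomp Require Import all_boot all_order fingroup perm all_algebra.
From mathcomp Require Import reals.
Set Implicit Arguments. Unset Strict Implicit. Unset Printing Implicit Defensive.
Import Order.TTheory GRing.Theory Num.Theory.
Local Open Scope ring_scope.

(* A combinatorial map: theta sends the arc (u,v) to (v,u); rho is the
   rotation at each vertex (its orbits are the vertices, an arc belongs to
   the rho-orbit of its tail).  The face successor of (u,v) is
   rho (theta (u,v)) = (v,w), i.e. the permutation theta * rho
   (mathcomp composes left-to-right: (s * t) x = t (s x)). *)
Definition face_perm (D : finType) (theta rho : {perm D}) : {perm D} :=
  (theta * rho)%g.

Definition vertices (D : finType) (rho : {perm D}) : {set {set D}} :=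
  porbits rho.
Definition faces (D : finType) (theta rho : {perm D}) : {set {set D}} :=
  porbits (face_perm theta rho).

Definition arc_reversal (D : finType) (theta : {perm D}) : Prop :=
  forall d, theta (theta d) = d /\ theta d != d.

Definition map_connected (D : finType) (theta rho : {perm D}) : Prop :=
  forall d e : D, connect (fun x y => (y == rho x) || (y == theta x)) d e.

(* the underlying graph is simple: no loops, no parallel edges *)
Definition map_simple (D : finType) (theta rho : {perm D}) : Prop :=
  (forall d, theta d \notin porbit rho d) /\
  (forall d e, porbit rho d = porbit rho e ->
     porbit rho (theta d) = porbit rho (theta e) -> d = e).

(* circular: every facial walk is a cycle, i.e. it has length >= 3 and the
   tails of its arcs are pairwise distinct vertices *)
Definition circular (D : finType) (theta rho : {perm D}) : Prop :=
  forall d, (3 <= #|porbit (face_perm theta rho) d|)%N /\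
  forall e, e \in porbit (face_perm theta rho) d ->
     porbit rho e = porbit rho d -> e = d.

Definition arc (D : finType) (i : 'I_#|D|) : D := enum_val i.

Definition arc_face_mx (R : realType) (D : finType) (theta rho : {perm D})
  : 'M[R]_(#|D|, #|faces theta rho|) :=
  \matrix_(i, j) ((arc i \in (enum_val j : {set D})) %:R).

Definition arc_tail_mx (R : realType) (D : finType) (rho : {perm D})
  : 'M[R]_(#|D|, #|vertices rho|) :=
  \matrix_(i, j) ((arc i \in (enum_val j : {set D})) %:R).

Definition col_normalize (R : realType) m n (A : 'M[R]_(m, n)) : 'M[R]_(m, n) :=
  \matrix_(i, j) (A i j / Num.sqrt (\sum_k A k j ^+ 2)).

Definition transition_mx (R : realType) (D : finType) (theta rho : {perm D})
  : 'M[R]_#|D| :=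
  let Mh := col_normalize (arc_face_mx R theta rho) in
  let Nh := col_normalize (arc_tail_mx R rho) in
  (2%:R *: (Mh *m Mh^T) - 1%:M) *m (2%:R *: (Nh *m Nh^T) - 1%:M).

From HB Require Import structures.
From mathcomp Require Import all_boot all_order fingroup perm action all_algebra.
From mathcomp Require Import reals.
From mathcomp Require Import zify.
Set Implicit Arguments. Unset Strict Implicit. Unset Printing Implicit Defensive.
Import Order.TTheory GRing.Theory Num.Theory.
Local Open Scope ring_scope.

(* Both factors of U are reflections: if the columns of A are orthonormal, then
   2 A A^T - I is the reflection in col(A).  Since reflections are involutions,
   x is fixed by the product of the reflections in col(A) and col(B) iff
   x A A^T = x B B^T, and splitting x = x A A^T + (x - x A A^T) shows that the
   fixed space is (col A :&: col B) (+) (ker A^T :&: ker B^T).  Normalising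
   the columns of M and N changes neither their column spaces nor their
   kernels, and their columns are orthogonal because they are the indicator
   vectors of the two partitions of the arcs into faces and into vertices.
   A vector in col M :&: col N is constant on faces and on vertices, hence
   invariant under rho and theta * rho, hence under theta, hence constant by
   connectivity.  The dimension count is then 2l - (s + n - 1) + 1 = l + 2g by
   Euler's formula s + n = 2 + l - 2g. *)

Definition refl_mx (F : numFieldType) m n (A : 'M[F]_(m, n)) : 'M[F]_m :=
  2%:R *: (A *m A^T) - 1%:M.

Lemma trmx_refl_mx (F : numFieldType) m n (A : 'M[F]_(m, n)) :
  (refl_mx A)^T = refl_mx A.
Proof. by rewrite /refl_mx linearB /= linearZ /= trmx_mul trmxK trmx1. Qed.

Section OrthonormalColumns.
Variables (F : numFieldType) (m n : nat) (A : 'M[F]_(m, n)).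
Hypothesis orthoA : A^T *m A = 1%:M.

Lemma proj_orthonormal_idem : (A *m A^T) *m (A *m A^T) = A *m A^T.
Proof. by rewrite mulmxA -(mulmxA A) orthoA mulmx1. Qed.

Lemma refl_mxK : refl_mx A *m refl_mx A = 1%:M.
Proof.
rewrite /refl_mx mulmxBr mulmx1 mulmxBl mul1mx -scalemxAr -scalemxAl.
rewrite proj_orthonormal_idem scalerA -natrM (_ : (2 * 2)%N = 2 + 2)%N // natrD scalerDl.
by rewrite addrK opprB addrC subrK.
Qed.

Lemma proj_orthonormal_id_on_range k (X : 'M[F]_(k, m)) :
  (X <= A^T)%MS -> X *m (A *m A^T) = X.
Proof. by case/submxP => W ->; rewrite mulmxA -(mulmxA W) orthoA mulmx1. Qed.

Lemma mxrank_orthonormal : \rank A = n.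
Proof.
apply/eqP; rewrite eqn_leq rank_leq_col -{1}(mxrank1 F n) -orthoA.
by rewrite mxrankM_maxr.
Qed.

End OrthonormalColumns.

Section ReflectionProduct.
Variables (F : numFieldType) (m s n : nat) (A : 'M[F]_(m, s)) (B : 'M[F]_(m, n)).
Hypotheses (orthoA : A^T *m A = 1%:M) (orthoB : B^T *m B = 1%:M).

Lemma sub_kermx_refl_mulE k (X : 'M[F]_(k, m)) :
  (X <= kermx (refl_mx A *m refl_mx B - 1%:M)^T)%MS =
  (X *m (A *m A^T) == X *m (B *m B^T)).
Proof.
rewrite linearB /= trmx_mul !trmx_refl_mx trmx1.
have -> : (X <= kermx (refl_mx B *m refl_mx A - 1%:M))%MS =
          (X *m refl_mx B == X *m refl_mx A).
  apply/sub_kermxP/eqP => [| XB].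
    rewrite mulmxBr mulmx1 => /subr0_eq XBA.
    by rewrite -{2}XBA -!mulmxA refl_mxK // mulmx1.
  by rewrite mulmxBr mulmx1 mulmxA XB -mulmxA refl_mxK // mulmx1 subrr.
rewrite /refl_mx !mulmxBr !mulmx1 -!scalemxAr (inj_eq (addIr _)) eq_sym.
by rewrite (inj_eq (scalerI _)) // pnatr_eq0.
Qed.

Lemma kermx_refl_mulE :
  (kermx (refl_mx A *m refl_mx B - 1%:M)^T :=:
   (A^T :&: B^T) + (kermx A :&: kermx B))%MS.
Proof.
set E := kermx _; apply/eqmxP/andP; split.
  have EAB : E *m (A *m A^T) = E *m (B *m B^T).
    by apply/eqP; rewrite -sub_kermx_refl_mulE.
  rewrite -[X in (X <= _)%MS](subrK (E *m (A *m A^T))) addrC.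
  apply: addmx_sub_adds; rewrite sub_capmx.
    by rewrite {2}EAB !mulmxA !submxMl.
  apply/andP; split; apply/sub_kermxP.
    by rewrite mulmxBl -!mulmxA orthoA mulmx1 subrr.
  by rewrite EAB mulmxBl -!mulmxA orthoB mulmx1 subrr.
rewrite addsmx_sub !sub_kermx_refl_mulE.
rewrite (proj_orthonormal_id_on_range orthoA (capmxSl _ _)).
rewrite (proj_orthonormal_id_on_range orthoB (capmxSr _ _)) eqxx /=.
by rewrite !mulmxA (sub_kermxP (capmxSl _ _)) (sub_kermxP (capmxSr _ _)) !mul0mx.
Qed.

End ReflectionProduct.

Lemma capmx_tr_kermx (F : realFieldType) m n (A : 'M[F]_(m, n)) :
  (A^T :&: kermx A = 0)%MS.
Proof.
move: (capmxSl A^T (kermx A)) (capmxSr A^T (kermx A)).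
move: (A^T :&: kermx A)%MS => Z /submxP[W defZ] /sub_kermxP ZA0.
have ZZt : Z *m Z^T = 0 by rewrite {2}defZ trmx_mul trmxK mulmxA ZA0 mul0mx.
apply/matrixP => i j; rewrite mxE; apply/eqP.
move/matrixP/(_ i i)/eqP: ZZt; rewrite !mxE psumr_eq0 => [/allP/(_ j)|k _].
  by rewrite mem_index_enum mxE -expr2 sqrf_eq0 => /(_ isT).
by rewrite mxE -expr2 sqr_ge0.
Qed.

Lemma mxdirect_cap_tr_kermx (F : realFieldType) m s n
    (A : 'M[F]_(m, s)) (B : 'M[F]_(m, n)) :
  mxdirect ((A^T :&: B^T) + (kermx A :&: kermx B)).
Proof.
apply/mxdirect_addsP/eqP; rewrite -submx0 -(capmx_tr_kermx A).
by rewrite capmxS ?capmxSl.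
Qed.

Lemma mxrank_cap_kermx (F : fieldType) m s n (A : 'M[F]_(m, s)) (B : 'M[F]_(m, n)) :
  \rank (kermx A :&: kermx B) = (m - \rank (A^T + B^T))%N.
Proof.
have -> : (kermx A :&: kermx B :=: kermx (row_mx A B))%MS.
  apply/eqmxP/andP; split.
    apply/sub_kermxP; rewrite mul_mx_row.
    by rewrite (sub_kermxP (capmxSl _ _)) (sub_kermxP (capmxSr _ _)) row_mx0.
  have /sub_kermxP := submx_refl (kermx (row_mx A B)).
  rewrite mul_mx_row => /eqP; rewrite row_mx_eq0 => /andP[/eqP KA /eqP KB].
  by rewrite sub_capmx; apply/andP; split; apply/sub_kermxP.
by rewrite mxrank_ker -mxrank_tr tr_row_mx addsmxE.
Qed.

Lemma mxrank_adds_cap_tr_kermx (F : realFieldType) m s n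
    (A : 'M[F]_(m, s)) (B : 'M[F]_(m, n)) :
  (\rank ((A^T :&: B^T) + (kermx A :&: kermx B)) + \rank A + \rank B
   = m + 2 * \rank (A^T :&: B^T))%N.
Proof.
have := mxrank_sum_cap (A^T :&: B^T)%MS (kermx A :&: kermx B)%MS.
have := mxrank_sum_cap A^T B^T.
have := rank_leq_col (A^T + B^T)%MS.
move/mxdirect_addsP: (mxdirect_cap_tr_kermx A B) => ->.
rewrite mxrank0 addn0 mxrank_cap_kermx !mxrank_tr => rank_le rank_sum ->.
(* [set] merges copies of this rank that differ only in a hidden structure
   projection, which [lia] would otherwise treat as distinct atoms. *)
by set r := \rank (A^T + B^T)%MS; lia.
Qed.

Lemma eqmx_kermx_tr (F : fieldType) m s n (A : 'M[F]_(m, s)) (B : 'M[F]_(m, n)) :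
  (A^T :=: B^T)%MS -> (kermx A :=: kermx B)%MS.
Proof.
have sub_ker p q (X : 'M[F]_(m, p)) (Y : 'M[F]_(m, q)) :
    (Y^T <= X^T)%MS -> (kermx X <= kermx Y)%MS.
  case/submxP => W /(congr1 trmx); rewrite trmx_mul !trmxK => ->.
  by apply/sub_kermxP; rewrite mulmxA mulmx_ker mul0mx.
by move=> eqAB; apply/eqmxP; rewrite !sub_ker ?eqAB.
Qed.

Section ColNormalize.
Variables (R : realType) (m n : nat) (A : 'M[R]_(m, n)).
Hypotheses (diagA : is_diag_mx (A^T *m A)) (normA : forall j, 0 < \sum_k A k j ^+ 2).

Let c j := Num.sqrt (\sum_k A k j ^+ 2).

Let c_neq0 j : c j != 0.
Proof. by rewrite gt_eqF // sqrtr_gt0. Qed.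

Lemma col_normalizeE : col_normalize A = A *m diag_mx (\row_j (c j)^-1).
Proof. by apply/matrixP => i j; rewrite mul_mx_diag !mxE. Qed.

Lemma col_normalizeK : col_normalize A *m diag_mx (\row_j c j) = A.
Proof. by apply/matrixP => i j; rewrite mul_mx_diag !mxE (divfK (c_neq0 j)). Qed.

Lemma col_normalize_orthonormal : (col_normalize A)^T *m col_normalize A = 1%:M.
Proof.
apply/matrixP => j j'.
transitivity ((A^T *m A) j j' / (c j * c j')).
  rewrite !mxE mulr_suml; apply: eq_bigr => k _.
  by rewrite !mxE mulrACA invfM.
rewrite [RHS]mxE; case: (eqVneq j j') => [<- | neq_jj']; last first.
  by rewrite (is_diag_mxP diagA) ?mul0r.
have -> : (A^T *m A) j j = c j * c j.
  rewrite -expr2 sqr_sqrtr ?sumr_ge0 // => [|k _]; last exact: sqr_ge0.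
  by rewrite mxE; apply: eq_bigr => k _; rewrite mxE expr2.
by rewrite divff ?mulf_neq0.
Qed.

Lemma eqmx_tr_col_normalize : ((col_normalize A)^T :=: A^T)%MS.
Proof.
apply/eqmxP/andP; split; first by rewrite col_normalizeE trmx_mul submxMl.
by rewrite -[X in (X^T <= _)%MS]col_normalizeK trmx_mul submxMl.
Qed.

Lemma eqmx_kermx_col_normalize : (kermx (col_normalize A) :=: kermx A)%MS.
Proof. exact: eqmx_kermx_tr eqmx_tr_col_normalize. Qed.

Lemma mxrank_orthogonal_cols : \rank A = n.
Proof.
rewrite -mxrank_tr -eqmx_tr_col_normalize mxrank_tr.
exact: mxrank_orthonormal col_normalize_orthonormal.
Qed.

End ColNormalize.

Lemma kermx_refl_mul_col_normalizeE (R : realType) m s n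
    (A : 'M[R]_(m, s)) (B : 'M[R]_(m, n)) :
  is_diag_mx (A^T *m A) -> (forall j, 0 < \sum_k A k j ^+ 2) ->
  is_diag_mx (B^T *m B) -> (forall j, 0 < \sum_k B k j ^+ 2) ->
  (kermx (refl_mx (col_normalize A) *m refl_mx (col_normalize B) - 1%:M)^T :=:
   (A^T :&: B^T) + (kermx A :&: kermx B))%MS.
Proof.
move=> diagA normA diagB normB.
apply: eqmx_trans (kermx_refl_mulE (col_normalize_orthonormal diagA normA)
                                   (col_normalize_orthonormal diagB normB)) _.
apply: adds_eqmx; apply: cap_eqmx;
  by [exact: eqmx_tr_col_normalize | exact: eqmx_kermx_col_normalize].
Qed.

(* [arc_face_mx] and [arc_tail_mx] are, by definition, [part_mx] of the faces
   and of the vertices. *)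
Definition part_mx (R : pzSemiRingType) (D : finType) (P : {set {set D}}) :
    'M[R]_(#|D|, #|P|) :=
  \matrix_(i, j) ((enum_val i \in (enum_val j : {set D}))%:R).

Section PartitionIncidence.
Variables (R : realFieldType) (D : finType) (P : {set {set D}}).
Hypothesis partP : partition P [set: D].

Let coverP : cover P = [set: D]. Proof. by case/and3P: partP => /eqP. Qed.
Let trivP : trivIset P. Proof. by case/and3P: partP. Qed.
Let set0P : set0 \notin P. Proof. by case/and3P: partP. Qed.

Let mem_blockE B C x : B \in P -> C \in P -> x \in B -> (x \in C) = (C == B).
Proof.
move=> PB PC xB; apply/idP/eqP => [xC | -> //].
by rewrite -(def_pblock trivP PC xC) (def_pblock trivP PB xB).
Qed.

Lemma part_mx_gram_diag : is_diag_mx ((part_mx R P)^T *m part_mx R P).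
Proof.
apply/is_diag_mxP => j j' neq_jj'; rewrite mxE; apply: big1 => k _; rewrite !mxE.
case: (boolP (enum_val k \in enum_val j')) => [xj' | _]; last by rewrite mulr0.
rewrite (mem_blockE (enum_valP j') (enum_valP j) xj') (inj_eq enum_val_inj).
by rewrite (negPf (neq_jj' : j != j')) mul0r.
Qed.

Lemma part_mx_col_sqr_gt0 j : 0 < \sum_k part_mx R P k j ^+ 2.
Proof.
have /set0Pn[x xj] : enum_val j != set0.
  by apply: contraNneq set0P => <-; exact: enum_valP.
rewrite (bigD1 (enum_rank x)) //= ltr_pwDl ?sumr_ge0 // => [|k _]; last exact: sqr_ge0.
by rewrite mxE enum_rankK xj expr1n ltr01.
Qed.

Lemma const_sub_tr_part_mx : ((const_mx 1 : 'rV[R]_#|D|) <= (part_mx R P)^T)%MS.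
Proof.
apply/submxP; exists (const_mx 1); apply/matrixP => i k; rewrite !mxE.
have xP : enum_val k \in cover P by rewrite coverP inE.
have PxP := pblock_mem xP.
rewrite (bigD1 (enum_rank_in PxP (pblock P (enum_val k)))) //= big1 => [|j neq_j].
  by rewrite !mxE enum_rankK_in // mem_pblock xP mul1r addr0.
rewrite !mxE (mem_blockE (pblock_mem xP) (enum_valP j)) ?mem_pblock //.
by rewrite -(inj_eq enum_val_inj) enum_rankK_in // in neq_j; rewrite (negPf neq_j) mulr0.
Qed.

Lemma sub_tr_part_mx_block_const (v : 'rV[R]_#|D|) B x y :
  (v <= (part_mx R P)^T)%MS -> B \in P -> x \in B -> y \in B ->
  v 0 (enum_rank x) = v 0 (enum_rank y).
Proof.
case/submxP => w -> PB xB yB; rewrite !mxE; apply: eq_bigr => j _.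
by rewrite !mxE !enum_rankK !(mem_blockE PB (enum_valP j)).
Qed.

End PartitionIncidence.

Lemma partition_porbits (D : finType) (s : {perm D}) : partition (porbits s) [set: D].
Proof.
have -> : porbits s = orbit 'P <[s]>%g @: [set: D].
  by apply/setP => B; apply/imsetP/imsetP => -[x _ ->]; exists x; rewrite ?porbitE.
by apply: orbit_partition; apply/actsP => x _ y; rewrite !inE.
Qed.

Lemma sub_tr_part_mx_porbits_perm (R : realFieldType) (D : finType) (s : {perm D})
    (v : 'rV[R]_#|D|) d :
  (v <= (part_mx R (porbits s))^T)%MS -> v 0 (enum_rank (s d)) = v 0 (enum_rank d).
Proof.
move=> vP; have partS := partition_porbits s.
apply: (sub_tr_part_mx_block_const partS vP _ _ (porbit_id s d)); first exact: imset_f.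
by rewrite -{1}[s]expg1 mem_porbit.
Qed.

Lemma sub_const_mx_row (F : fieldType) n (v : 'rV[F]_n) :
  (forall i j, v 0 i = v 0 j) -> (v <= (const_mx 1 : 'rV[F]_n))%MS.
Proof.
case: n v => [|n] v eq_v; first by rewrite thinmx0 sub0mx.
have -> : v = v 0 0 *: const_mx 1.
  by apply/matrixP => i j; rewrite !mxE mulr1 (ord1 i); exact: eq_v.
exact: scalemx_sub.
Qed.

Lemma sub_const_map_connected (F : fieldType) (D : finType) (theta rho : {perm D})
    (v : 'rV[F]_#|D|) :
  map_connected theta rho ->
  (forall d, v 0 (enum_rank (rho d)) = v 0 (enum_rank d)) ->
  (forall d, v 0 (enum_rank (face_perm theta rho d)) = v 0 (enum_rank d)) ->
  (v <= (const_mx 1 : 'rV[F]_#|D|))%MS.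
Proof.
move=> conn v_rho v_face; pose h d := v 0 (enum_rank d).
have h_theta d : h (theta d) = h d by rewrite /h -v_rho -(v_face d) /face_perm permM.
have h_const d e : h e = h d.
  have /connectP[p dp ->] := conn d e.
  elim: p d dp => [|x p IHp] d //= /andP[/orP[] /eqP -> /IHp ->].
    exact: v_rho.
  exact: h_theta.
apply: sub_const_mx_row => i j.
by rewrite -[i]enum_valK -[j]enum_valK; exact: h_const.
Qed.

Lemma arc_reversal_card_even (D : finType) (theta : {perm D}) :
  arc_reversal theta -> (2 %| #|D|)%N.
Proof.
move=> rev; set A := [set d | enum_rank d < enum_rank (theta d)]%N.
have AC : ~: A = theta @^-1: A.
  apply/setP => d; have [theta2 theta_neq] := rev d.
  have ne : enum_rank (theta d) != enum_rank d :> nat.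
    by rewrite (inj_eq val_inj) (inj_eq enum_rank_inj) theta_neq.
  by rewrite !inE theta2 -leqNgt leq_eqVlt (negPf ne).
by rewrite -(cardsC A) AC card_preimset ?addnn ?dvdn2 ?odd_double //; exact: perm_inj.
Qed.

Theorem theorem3p1 (R : realType) (D : finType) (theta rho : {perm D}) (g : nat) :
  (0 < #|D|)%N ->
  arc_reversal theta ->
  map_connected theta rho ->
  map_simple theta rho ->
  circular theta rho ->
  (#|vertices rho| + #|faces theta rho| + 2 * g = 2 + #|D| %/ 2)%N ->
  let M := arc_face_mx R theta rho in
  let N := arc_tail_mx R rho in
  let U := transition_mx R theta rho in
  let E := kermx (U - 1%:M)^T in
  let C := (M^T :&: N^T)%MS in
  let K := (kermx M :&: kermx N)%MS in
  [/\ (E :=: C + K)%MS, mxdirect (C + K),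
      \rank E = (#|D| %/ 2 + 2 * g)%N
    & (C :=: (const_mx 1 : 'rV[R]_#|D|))%MS].
Proof.
move=> D_gt0 rev conn _ _ euler M N U E C K.
have partF := partition_porbits (face_perm theta rho).
have partV := partition_porbits rho.
have [diagM normM] := (part_mx_gram_diag R partF, part_mx_col_sqr_gt0 R partF).
have [diagN normN] := (part_mx_gram_diag R partV, part_mx_col_sqr_gt0 R partV).
have EE : (E :=: C + K)%MS := kermx_refl_mul_col_normalizeE diagM normM diagN normN.
have C1 : (C :=: (const_mx 1 : 'rV[R]_#|D|))%MS.
  apply/eqmxP/andP; split; last by rewrite sub_capmx !const_sub_tr_part_mx.
  apply/row_subP => i; apply: sub_const_map_connected conn _ _ => d;
    apply: sub_tr_part_mx_porbits_perm; apply: submx_trans (row_sub i C) _;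
    by [exact: capmxSr | exact: capmxSl].
have rankC : \rank C = 1%N.
  rewrite C1 rank_rV; case: eqP => // /matrixP /(_ 0 (Ordinal D_gt0)).
  by rewrite !mxE => /eqP; rewrite oner_eq0.
split => //; first exact: mxdirect_cap_tr_kermx.
have := mxrank_adds_cap_tr_kermx M N.
rewrite -EE rankC (mxrank_orthogonal_cols diagM normM).
rewrite (mxrank_orthogonal_cols diagN normN).
have := arc_reversal_card_even rev; move: euler; rewrite /vertices /faces; lia.
Qed.
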